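(* Let $\Sigma$ be a finite alphabet with at least two letters. The automatic topology on $T_\Sigma^\omega$, i.e. the topology generated by the regular tree languages that are closed for the Cantor topology on $T_\Sigma^\omega$, is Polish.
   Context: $T_\Sigma^\omega$ is the set of maps $\{l,r\}^*\to\Sigma$ with the Cantor topology (distance $2^{-n}$, $n$ the least length of a node where two trees differ). A regular tree language is one accepted by a Muller tree automaton $(\Sigma,Q,q_0,\Delta,\mathcal{F})$ with $\Delta\subseteq Q\times\Sigma\times Q\times Q$, $\mathcal{F}\subseteq 2^Q$: a run $\rho:\{l,r\}^*\to Q$ satisfies $\rho(\text{root})=q_0$ and $(\rho(u),t(u),\rho(ul),\rho(ur))\in\Delta$, and is accepting if for each infinite branch the set of states occurring infinitely often on it is in $\mathcal{F}$. *)

From Stdlib Require Import Reals List.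
From mathcomp Require Import all_boot.
Set Implicit Arguments. Unset Strict Implicit. Unset Printing Implicit Defensive.

(* Nodes are words over {l,r}; l = false, r = true; the children of u are
   u l = rcons u false and u r = rcons u true; the root is [::]. *)
Definition node := seq bool.
Definition tree (Sigma : Type) := node -> Sigma.

Record muller (Sigma : finType) := Muller {
  mstate : finType;
  minit  : mstate;
  mdelta : mstate -> Sigma -> mstate -> mstate -> bool;
  macc   : {set {set mstate}}
}.

Definition branch_node (b : nat -> bool) (n : nat) : node := mkseq b n.

Definition is_run (Sigma : finType) (A : muller Sigma) (t : tree Sigma)
    (rho : node -> mstate A) : Prop :=
  rho [::] = @minit Sigma A /\
  forall u : node, @mdelta Sigma A (rho u) (t u) (rho (rcons u false)) (rho (rcons u true)).

Definition inf_often (Q : Type) (rho : node -> Q) (b : nat -> bool) (q : Q) : Prop :=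
  forall N : nat, exists n : nat, (N <= n)%N /\ rho (branch_node b n) = q.

Definition accepting (Sigma : finType) (A : muller Sigma) (rho : node -> mstate A) : Prop :=
  forall b : nat -> bool,
    exists S : {set mstate A}, S \in @macc Sigma A /\ (forall q, q \in S <-> inf_often rho b q).

Definition accepts (Sigma : finType) (A : muller Sigma) (t : tree Sigma) : Prop :=
  exists rho, @is_run Sigma A t rho /\ @accepting Sigma A rho.

Definition regular (Sigma : finType) (L : tree Sigma -> Prop) : Prop :=
  exists A : muller Sigma, forall t, L t <-> accepts A t.

(* Two trees agree on all nodes of length < n, i.e. their Cantor distance is < 2^{-(n-1)}. *)
Definition agree_upto (Sigma : Type) (n : nat) (t t' : tree Sigma) : Prop :=
  forall u : node, (size u < n)%N -> t u = t' u.

Definition cantor_closed (Sigma : Type) (L : tree Sigma -> Prop) : Prop :=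
  forall t, ~ L t -> exists n : nat, forall t', agree_upto n t t' -> ~ L t'.

(* Open sets of the topology generated by the family B (as a subbasis):
   unions of finite intersections of members of B. *)
Definition generated_open (X : Type) (B : (X -> Prop) -> Prop) (U : X -> Prop) : Prop :=
  forall x, U x -> exists l : list (X -> Prop),
    Forall B l /\ Forall (fun V => V x) l /\
    (forall y, Forall (fun V => V y) l -> U y).

Definition is_metric (X : Type) (d : X -> X -> R) : Prop :=
  (forall x y, Rle R0 (d x y)) /\
  (forall x y, d x y = R0 <-> x = y) /\
  (forall x y, d x y = d y x) /\
  (forall x y z, Rle (d x z) (Rplus (d x y) (d y z))).

Definition metric_open (X : Type) (d : X -> X -> R) (U : X -> Prop) : Prop :=
  forall x, U x -> exists eps : R, Rlt R0 eps /\ forall y, Rlt (d x y) eps -> U y.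

Definition cauchy (X : Type) (d : X -> X -> R) (s : nat -> X) : Prop :=
  forall eps : R, Rlt R0 eps -> exists N : nat,
    forall m n, (N <= m)%N -> (N <= n)%N -> Rlt (d (s m) (s n)) eps.

Definition converges_to (X : Type) (d : X -> X -> R) (s : nat -> X) (x : X) : Prop :=
  forall eps : R, Rlt R0 eps -> exists N : nat, forall n, (N <= n)%N -> Rlt (d (s n) x) eps.

Definition complete_metric (X : Type) (d : X -> X -> R) : Prop :=
  forall s, cauchy d s -> exists x, converges_to d s x.

Definition separable_metric (X : Type) (d : X -> X -> R) : Prop :=
  exists s : nat -> X, forall x (eps : R), Rlt R0 eps -> exists n, Rlt (d x (s n)) eps.

Definition polish (X : Type) (is_open : (X -> Prop) -> Prop) : Prop :=
  exists d : X -> X -> R,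
    is_metric d /\ (forall U, is_open U <-> metric_open d U) /\
    complete_metric d /\ separable_metric d.

Definition automatic_open (Sigma : finType) : (tree Sigma -> Prop) -> Prop :=
  generated_open (fun L : tree Sigma -> Prop => regular L /\ cantor_closed L).

From Stdlib Require Import Reals List Lra.
From Stdlib Require Import Classical ClassicalEpsilon FunctionalExtensionality PropExtensionality.
From mathcomp Require Import all_boot.
Set Implicit Arguments. Unset Strict Implicit. Unset Printing Implicit Defensive.

(* There are only countably many Muller automata, so the automatic topology is
   generated by countably many sets; it refines the Cantor topology because the
   cylinders {t | t u = a} are regular and closed.  A closed regular language L
   is recorded by its miss depth, which is None on L and, off L, the least n
   such that the n-ball around the tree misses L; it is locally constant.  The
   labels t u together with the miss depths of the closed regular languages are
   countably many locally constant features determining the topology, so the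
   first-difference ultrametric built from them induces it.  It is separable
   because the features take countably many values, and complete: along a
   Cauchy sequence every feature stabilises, the labels define the limit, and
   closedness of L makes the stable miss depths those of the limit. *)

Definition asbool (P : Prop) : bool :=
  if excluded_middle_informative P then true else false.

Lemma asboolP (P : Prop) : reflect P (asbool P).
Proof. by rewrite /asbool; case: excluded_middle_informative => H; constructor. Qed.

Definition eventually (P : nat -> Prop) : Prop := exists M, forall m, (M <= m)%N -> P m.

Lemma eventually_all_seq (A : eqType) (s : seq A) (P : A -> nat -> Prop) :
  (forall a, a \in s -> eventually (P a)) ->
  eventually (fun m => forall a, a \in s -> P a m).
Proof.
elim: s => [|a s IH] Hs; first by exists 0%N.
case: IH => [b Hb|M HM]; first by apply: Hs; rewrite in_cons Hb orbT.
case: (Hs a (mem_head a s)) => M' HM'.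
exists (maxn M M') => m; rewrite geq_max => /andP [HMm HM'm] b.
by rewrite in_cons => /orP [/eqP ->|Hb]; [exact: HM' | exact: HM].
Qed.

Section GeneratedTopology.
Variables (X : Type) (B : (X -> Prop) -> Prop).

Definition fin_nbhd (x : X) (P : X -> Prop) : Prop :=
  exists l : list (X -> Prop), Forall B l /\ Forall (fun V => V x) l /\
    (forall y, Forall (fun V => V y) l -> P y).

Lemma fin_nbhd_basic x V : B V -> V x -> fin_nbhd x V.
Proof. by move=> BV Vx; exists [:: V]; do 2?split; auto => y Vy; exact: Forall_inv Vy. Qed.

Lemma fin_nbhd_impl x (P Q : X -> Prop) :
  (forall y, P y -> Q y) -> fin_nbhd x P -> fin_nbhd x Q.
Proof. by move=> PQ [l [Bl [lx lP]]]; exists l; split; [|split] => // y /lP /PQ. Qed.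

Lemma fin_nbhd_all_seq (A : eqType) (s : seq A) x (P : A -> X -> Prop) :
  (forall a, a \in s -> fin_nbhd x (P a)) ->
  fin_nbhd x (fun y => forall a, a \in s -> P a y).
Proof.
elim: s => [|a s IH] Hs; first by exists nil.
case: IH => [b Hb|l [Bl [lx lP]]]; first by apply: Hs; rewrite in_cons Hb orbT.
case: (Hs a (mem_head a s)) => l' [Bl' [l'x l'P]].
exists (l' ++ l); split; [exact/Forall_app | split; first exact/Forall_app].
move=> y /Forall_app [l'y ly] b.
by rewrite in_cons => /orP [/eqP ->|Hb]; [exact: l'P | exact: lP].
Qed.

End GeneratedTopology.

Local Open Scope R_scope.

Lemma halfpow_pos n : (0 < (/2) ^ n).
Proof. apply: pow_lt; lra. Qed.

Lemma halfpow_lt m n : ((/2) ^ m < (/2) ^ n) <-> (n < m)%N.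
Proof.
suff lt_mn : forall m n, (n < m)%N -> ((/2) ^ m < (/2) ^ n).
  split; last exact: lt_mn.
  case: (ltngtP n m) => // [/lt_mn | ->]; lra.
move=> {}m {}n /subnKC <-; elim: (m - n.+1)%N => [|k IH].
  by rewrite addn0 /=; have := halfpow_pos n; lra.
by rewrite addnS; move: IH => /=; have := halfpow_pos (n + k); lra.
Qed.

Lemma halfpow_small eps : (0 < eps) -> exists j, ((/2) ^ j < eps).
Proof.
move=> eps_gt0; case: (pow_lt_1_zero (/2) _ eps eps_gt0) => [|N HN].
  by rewrite Rabs_pos_eq; lra.
by exists N; have := HN N (le_n N); rewrite Rabs_pos_eq //; exact/Rlt_le/halfpow_pos.
Qed.

Section FirstDifferenceMetric.
Variables (X : Type) (C : countType) (feat : nat -> X -> C).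
Hypothesis feat_inj : forall x y, (forall j, feat j x = feat j y) -> x = y.

Definition fdist (x y : X) : R :=
  match excluded_middle_informative (exists j, feat j x != feat j y) with
  | left H => (/2) ^ ex_minn H
  | right _ => 0
  end.

Variant fdist_spec (x y : X) : R -> Prop :=
  | FdistEq of (forall i, feat i x = feat i y) : fdist_spec x y 0
  | FdistNeq m of feat m x != feat m y & (forall i, (i < m)%N -> feat i x = feat i y) :
      fdist_spec x y ((/2) ^ m).

Lemma fdistP x y : fdist_spec x y (fdist x y).
Proof.
rewrite /fdist; case: excluded_middle_informative => [H|H].
- case: ex_minnP => m neq_m min_m; constructor => // i lt_im.
  by apply/eqP/negPn/negP => /min_m; rewrite leqNgt lt_im.
- by constructor => i; apply/eqP/negPn/negP => neq_i; apply: H; exists i.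
Qed.

Lemma fdist_lt_halfpow x y j :
  (fdist x y < (/2) ^ j) <-> (forall i, (i <= j)%N -> feat i x = feat i y).
Proof.
case: fdistP => [eq_xy | m neq_m eq_lt_m]; first by split=> // _; exact: halfpow_pos.
rewrite halfpow_lt; split=> [lt_jm i le_ij | eq_le_j].
- exact/eq_lt_m/(leq_ltn_trans le_ij).
- by rewrite ltnNge; apply: contra neq_m => /eq_le_j ->.
Qed.

Lemma fdist_ge0 x y : (0 <= fdist x y).
Proof. by case: fdistP => [|m _ _]; [lra | exact/Rlt_le/halfpow_pos]. Qed.

Lemma fdist_eq0 x y : fdist x y = 0 <-> x = y.
Proof.
split=> [dxy0 | <-]; last by case: fdistP => // m; rewrite eqxx.
apply: feat_inj => i; apply: (proj1 (fdist_lt_halfpow x y i)) => //.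
by rewrite dxy0; exact: halfpow_pos.
Qed.

Lemma fdistC x y : fdist x y = fdist y x.
Proof.
case: fdistP => [eq_xy | m neq_m eq_lt_m]; case: fdistP => [eq_yx | m' neq_m' eq_lt_m'] //.
- by move: neq_m'; rewrite eq_xy eqxx.
- by move: neq_m; rewrite eq_yx eqxx.
- case: (ltngtP m m') => [lt_mm' | lt_m'm | -> //].
  + by move: neq_m; rewrite eq_lt_m' // eqxx.
  + by move: neq_m'; rewrite eq_lt_m // eqxx.
Qed.

(* The ultrametric inequality: if both [fdist x y] and [fdist y z] are below
   [(/2)^m], then x, y and z share their first m+1 features. *)
Lemma fdist_triangle x y z : (fdist x z <= fdist x y + fdist y z).
Proof.
have := fdist_ge0 x y; have := fdist_ge0 y z.
case: (fdistP x z) => [|m neq_m _]; first lra.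
case: (Rlt_le_dec (fdist x y) ((/2) ^ m)) => /= [/fdist_lt_halfpow xy|]; last lra.
case: (Rlt_le_dec (fdist y z) ((/2) ^ m)) => /= [/fdist_lt_halfpow yz|]; last lra.
by move: neq_m; rewrite xy // yz // eqxx.
Qed.

Lemma fdist_metric : is_metric fdist.
Proof.
split; first exact: fdist_ge0.
split; first exact: fdist_eq0.
split; [exact: fdistC | exact: fdist_triangle].
Qed.

Definition feat_nbhd (x : X) (P : X -> Prop) : Prop :=
  exists j, forall y, (forall i, (i <= j)%N -> feat i x = feat i y) -> P y.

Lemma fdist_metric_openE U :
  metric_open fdist U <-> forall x, U x -> feat_nbhd x U.
Proof.
split=> Uopen x Ux; case: (Uopen x Ux).
- move=> eps [eps_gt0 ball_U]; case: (halfpow_small eps_gt0) => j lt_j_eps.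
  by exists j => y /fdist_lt_halfpow lt_xy; apply/ball_U/(Rlt_trans _ _ _ lt_xy).
- move=> j ball_U; exists ((/2) ^ j); split; first exact: halfpow_pos.
  by move=> y /fdist_lt_halfpow; exact: ball_U.
Qed.

Lemma feat_nbhd_and x (P Q : X -> Prop) :
  feat_nbhd x P -> feat_nbhd x Q -> feat_nbhd x (fun y => P y /\ Q y).
Proof.
move=> [j Pj] [k Qk]; exists (maxn j k) => y eq_y.
split; [apply: Pj | apply: Qk] => i le_i; apply: eq_y; rewrite leq_max le_i ?orbT //.
Qed.

Lemma generated_open_fdist (B : (X -> Prop) -> Prop) :
  (forall i x, fin_nbhd B x (fun y => feat i x = feat i y)) ->
  (forall V x, B V -> V x -> feat_nbhd x V) ->
  forall U, generated_open B U <-> metric_open fdist U.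
Proof.
move=> feat_loc B_open U; rewrite fdist_metric_openE.
split=> Uopen x /Uopen.
- case=> l [Bl [lx lU]].
  suff [j Hj] : feat_nbhd x (fun y => Forall (fun V => V y) l) by exists j => y /Hj /lU.
  elim: l Bl lx {lU} => [|V l IH] Bl lx; first by exists 0%N.
  case/Forall_cons_iff: Bl => BV Bl; case/Forall_cons_iff: lx => Vx lx.
  case: (feat_nbhd_and (B_open V x BV Vx) (IH Bl lx)) => j Hj.
  by exists j => y /Hj [Vy ly]; constructor.
- case=> j Hj; apply: (fin_nbhd_impl Hj).
  have := fin_nbhd_all_seq (s := iota 0 j.+1) (fun i _ => feat_loc i x).
  by apply: fin_nbhd_impl => y eq_y i le_ij; apply: eq_y; rewrite mem_iota.
Qed.

Lemma cauchy_fdist_stable s :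
  cauchy fdist s -> forall i, exists M, eventually (fun m => feat i (s m) = feat i (s M)).
Proof.
move=> s_cauchy i; case: (s_cauchy _ (halfpow_pos i)) => M HM.
exists M, M => m le_Mm; apply/esym/(proj1 (fdist_lt_halfpow _ _ i)) => //.
exact: HM.
Qed.

Lemma fdist_converges s x :
  (forall i, eventually (fun m => feat i (s m) = feat i x)) -> converges_to fdist s x.
Proof.
move=> s_feat eps eps_gt0; case: (halfpow_small eps_gt0) => j lt_j_eps.
case: (eventually_all_seq (s := iota 0 j.+1) (fun i _ => s_feat i)) => M HM.
exists M => m le_Mm; apply: Rlt_trans lt_j_eps; apply/fdist_lt_halfpow => i le_ij.
by apply: HM; rewrite // mem_iota.
Qed.

(* The countable dense set: for every finite sequence of feature values, one
   point realising it (or a default point). *)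
Lemma fdist_separable : inhabited X -> separable_metric fdist.
Proof.
case=> x0.
pose realises (c : seq C) y := forall i, (i < size c)%N -> feat i y = nth (feat 0 x0) c i.
pose point (c : seq C) : X :=
  match excluded_middle_informative (exists y, realises c y) with
  | left H => proj1_sig (constructive_indefinite_description _ H)
  | right _ => x0
  end.
exists (fun n => if unpickle n is Some c then point c else x0).
move=> x eps eps_gt0; case: (halfpow_small eps_gt0) => j lt_j_eps.
pose c := [seq feat i x | i <- iota 0 j.+1].
have realises_x : realises c x.
  by move=> i; rewrite size_map size_iota => lt_ij; rewrite (nth_map 0%N) ?nth_iota ?size_iota.
exists (pickle c); rewrite pickleK; apply: Rlt_trans lt_j_eps.
apply/fdist_lt_halfpow => i le_ij; rewrite /point.
case: excluded_middle_informative => [H|[]]; last by exists x.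
case: (constructive_indefinite_description _ H) => y realises_y /=.
by rewrite realises_x ?realises_y // size_map size_iota.
Qed.

End FirstDifferenceMetric.

Local Close Scope R_scope.

Lemma prefix_rcons_nth (T : eqType) (x0 : T) (s t : seq T) x :
  prefix (rcons s x) t = [&& prefix s t, size s < size t & nth x0 t (size s) == x].
Proof.
rewrite !prefixE size_rcons; case: ltnP => [lt_st | le_ts].
- by rewrite (take_nth x0 lt_st) eqseq_rcons.
- rewrite andbF take_oversize ?(leq_trans le_ts) //.
  by apply/negbTE; apply: contraTneq le_ts => ->; rewrite size_rcons ltnn.
Qed.

Lemma accepting_full (Sigma : finType) (A : muller Sigma) (rho : node -> mstate A) :
  macc A = setT -> accepting rho.
Proof.
move=> accT b; exists [set q | asbool (inf_often rho b q)]; rewrite accT in_setT.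
by split=> // q; rewrite inE; split=> /asboolP.
Qed.

Section CylinderAutomaton.
Variables (Sigma : finType) (u : node) (a : Sigma).

Definition cylinder : tree Sigma -> Prop := fun t => t u = a.

Lemma cylinder_closed : cantor_closed cylinder.
Proof. by move=> t t_out; exists (size u).+1 => t' agree_tt'; rewrite /cylinder -agree_tt'. Qed.

Definition cyl_step (p : option 'I_(size u).+1) (c : bool) : option 'I_(size u).+1 :=
  if p is Some i then
    if (i < size u) && (nth false u i == c) then insub i.+1 else None
  else None.

Definition cyl_state (v : node) : option 'I_(size u).+1 := foldl cyl_step (Some ord0) v.

Lemma cyl_stateE v : omap val (cyl_state v) = if prefix v u then Some (size v) else None.
Proof.
elim/last_ind: v => [|v c IH]; first by rewrite /= prefix0s.
rewrite /cyl_state foldl_rcons -/(cyl_state v) (prefix_rcons_nth false) size_rcons.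
case: (cyl_state v) IH => [i|] /=; case: (prefix v u) => //= [[<-]].
by case: ifP => //= /andP [lt_iu _]; rewrite insubT.
Qed.

Lemma cyl_state_max v : (cyl_state v == Some ord_max) = (v == u).
Proof.
have := cyl_stateE v; case: (cyl_state v) => [i|] /=; case: ifP => // pre_vu.
- move=> [eq_iv]; apply/eqP/eqP => [[i_max] | eq_vu].
  + by move: pre_vu; rewrite prefixE -eq_iv i_max /= take_size => /eqP.
  + by congr Some; apply: val_inj; rewrite /= eq_iv eq_vu.
- by move=> _; apply/esym/eqP => eq_vu; rewrite eq_vu prefix_refl in pre_vu.
Qed.

Definition cylinder_automaton : muller Sigma :=
  @Muller Sigma (option 'I_(size u).+1) (Some ord0)
    (fun p s q r => [&& q == cyl_step p false, r == cyl_step p true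
                      & (p == Some ord_max) ==> (s == a)])
    [set: {set option 'I_(size u).+1}].

Lemma cylinder_automaton_run t rho : @is_run _ cylinder_automaton t rho -> rho = cyl_state.
Proof.
case=> rho_root rho_delta; apply: functional_extensionality => v.
elim/last_ind: v => [|v c IH] //; rewrite /cyl_state foldl_rcons -/(cyl_state v) -IH.
by case/and3P: (rho_delta v) => /eqP rho_l /eqP rho_r _; case: c.
Qed.

Lemma cylinder_regular : regular cylinder.
Proof.
exists cylinder_automaton => t; split => [t_u | [rho [rho_run _]]].
- exists cyl_state; split; last exact: accepting_full.
  split=> // v /=; rewrite /cyl_state !foldl_rcons -/(cyl_state v) !eqxx cyl_state_max /=.
  by apply/implyP => /eqP ->; exact/eqP.
- case/and3P: (rho_run.2 u) => _ _; rewrite (cylinder_automaton_run rho_run).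
  by rewrite cyl_state_max eqxx => /eqP.
Qed.

End CylinderAutomaton.

Section RegularEnumeration.
Variable Sigma : finType.

Lemma accepts_bij (A A' : muller Sigma) (f : mstate A -> mstate A') :
  bijective f -> f (minit A) = minit A' ->
  (forall p s q r, mdelta p s q r -> mdelta (f p) s (f q) (f r)) ->
  (forall S, S \in macc A -> f @: S \in macc A') ->
  forall t, accepts A t -> accepts A' t.
Proof.
move=> f_bij f_init f_delta f_acc t [rho [[rho_root rho_delta] rho_acc]].
have f_inj := bij_inj f_bij; case: f_bij => g fK gK.
exists (f \o rho); split; first by split=> [|v]; [rewrite /= rho_root | exact: f_delta].
move=> b; case: (rho_acc b) => S [accS infS]; exists (f @: S); split; first exact: f_acc.
move=> q; rewrite -(gK q) (mem_imset _ _ f_inj) infS.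
by split=> inf_q N; case: (inf_q N) => n [le_Nn rho_n]; exists n; split=> //=;
  [rewrite rho_n | apply: f_inj].
Qed.

(* Muller automata with state set ['I_n], as a countable type. *)
Definition muller_code (n : nat) :=
  ('I_n * {ffun 'I_n * Sigma * 'I_n * 'I_n -> bool} * {set {set 'I_n}})%type.

Definition muller_of_code n (c : muller_code n) : muller Sigma :=
  @Muller Sigma 'I_n c.1.1 (fun p s q r => c.1.2 (p, s, q, r)) c.2.

Definition code_of_muller (A : muller Sigma) : muller_code #|mstate A| :=
  (enum_rank (minit A),
   [ffun x => let: (p, s, q, r) := x in mdelta (enum_val p) s (enum_val q) (enum_val r)],
   [set enum_rank @: S | S : {set mstate A} in macc A]).

Lemma accepts_code_of_muller (A : muller Sigma) t :
  accepts (muller_of_code (code_of_muller A)) t <-> accepts A t.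
Proof.
split; apply: accepts_bij => //=.
- exact: enum_val_bij.
- exact: enum_rankK.
- by move=> p s q r; rewrite ffunE.
- move=> _ /imsetP [S accS ->]; rewrite -imset_comp (eq_imset _ (@enum_rankK _)).
  by rewrite imset_id.
- exact: enum_rank_bij.
- by move=> p s q r; rewrite ffunE !enum_rankK.
- by move=> S accS; apply: imset_f.
Qed.

Definition regular_enum (k : nat) : tree Sigma -> Prop :=
  if (unpickle k : option {n : nat & muller_code n}) is Some c
  then accepts (muller_of_code (tagged c)) else fun _ => False.

Lemma regular_enum_surj (L : tree Sigma -> Prop) : regular L -> exists k, L = regular_enum k.
Proof.
case=> A LA; exists (pickle (Tagged muller_code (code_of_muller A))).
rewrite /regular_enum pickleK /=; apply: functional_extensionality => t.
by apply: propositional_extensionality; rewrite accepts_code_of_muller.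
Qed.

End RegularEnumeration.

Section AgreeUpto.
Variable Sigma : Type.
Implicit Types (x y z : tree Sigma).

Lemma agree_upto_sym n x y : agree_upto n x y -> agree_upto n y x.
Proof. by move=> xy v lt_vn; rewrite xy. Qed.

Lemma agree_upto_trans n x y z : agree_upto n x y -> agree_upto n y z -> agree_upto n x z.
Proof. by move=> xy yz v lt_vn; rewrite xy // yz. Qed.

Lemma agree_upto_leq m n x y : (m <= n)%N -> agree_upto n x y -> agree_upto m x y.
Proof. by move=> le_mn xy v lt_vm; apply: xy; exact: leq_trans lt_vm le_mn. Qed.

End AgreeUpto.

Definition nodes_upto (n : nat) : seq node :=
  flatten [seq [seq tval w | w <- enum {: k.-tuple bool}] | k <- iota 0 n].

Lemma mem_nodes_upto (v : node) n : (size v < n)%N -> v \in nodes_upto n.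
Proof.
move=> lt_vn; apply/flattenP; exists [seq tval w | w <- enum {: (size v).-tuple bool}].
  by apply: (map_f (fun k => [seq tval w | w <- enum {: k.-tuple bool}])); rewrite mem_iota.
by rewrite (_ : v = tval (in_tuple v)) // map_f ?mem_enum.
Qed.

Section MissDepth.
Variables (Sigma : Type) (L : tree Sigma -> Prop).

Definition ball_misses (n : nat) (x : tree Sigma) : Prop :=
  forall y, agree_upto n x y -> ~ L y.

Definition miss_depth (x : tree Sigma) : option nat :=
  match excluded_middle_informative (exists n, asbool (ball_misses n x)) with
  | left H => Some (ex_minn H)
  | right _ => None
  end.

Lemma miss_depth_in x : L x -> miss_depth x = None.
Proof.
move=> Lx; rewrite /miss_depth; case: excluded_middle_informative => // H; exfalso.
by case: H => n /asboolP miss_n; exact: miss_n x (fun _ _ => erefl) Lx.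
Qed.

Lemma miss_depth_None x : cantor_closed L -> miss_depth x = None -> L x.
Proof.
move=> L_closed; rewrite /miss_depth; case: excluded_middle_informative => // nomiss _.
by apply: NNPP => /L_closed [n miss_n]; apply: nomiss; exists n; exact/asboolP.
Qed.

Lemma miss_depth_agree x y n :
  miss_depth x = Some n -> agree_upto n x y -> miss_depth y = Some n.
Proof.
have ball_misses_agree m x' y' : agree_upto m x' y' -> ball_misses m x' -> ball_misses m y'.
  by move=> x'y' miss_x' z /(agree_upto_trans x'y'); exact: miss_x'.
rewrite /miss_depth; case: excluded_middle_informative => // Hx.
case: ex_minnP => m /asboolP miss_m min_m [<-] xy.
case: excluded_middle_informative => [Hy | []]; last first.
  by exists m; apply/asboolP; exact: ball_misses_agree miss_m.
case: ex_minnP => k /asboolP miss_k min_k; congr Some.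
have le_km : (k <= m)%N by apply/min_k/asboolP; exact: ball_misses_agree miss_m.
have le_mk : (m <= k)%N.
  apply/min_m/asboolP; apply: ball_misses_agree miss_k.
  exact/agree_upto_sym/(agree_upto_leq le_km).
by apply/eqP; rewrite eqn_leq le_km le_mk.
Qed.

Lemma miss_depth_limit (s : nat -> tree Sigma) t d :
  cantor_closed L -> (forall n, eventually (fun m => agree_upto n (s m) t)) ->
  eventually (fun m => miss_depth (s m) = d) -> miss_depth t = d.
Proof.
move=> L_closed s_lim [M s_d].
have near_t n : exists m, (M <= m)%N /\ agree_upto n (s m) t.
  case: (s_lim n) => M' HM'; exists (maxn M M').
  by rewrite leq_maxl; split=> //; apply/HM'/leq_maxr.
case: d s_d => [n|] s_d.
- case: (near_t n) => m [le_Mm agree_m]; exact: miss_depth_agree (s_d m le_Mm) agree_m.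
- apply: miss_depth_in; apply: NNPP => /L_closed [n miss_n].
  case: (near_t n) => m [le_Mm agree_m].
  apply: (miss_n (s m)); first exact: agree_upto_sym.
  exact: miss_depth_None (s_d m le_Mm).
Qed.

End MissDepth.

Section TreeFeatures.
Variable Sigma : finType.

Definition closed_regular (L : tree Sigma -> Prop) : Prop := regular L /\ cantor_closed L.

Lemma cylinder_closed_regular u (a : Sigma) : closed_regular (cylinder u a).
Proof. by split; [exact: cylinder_regular | exact: cylinder_closed]. Qed.

(* Feature [j] codes either a node u (feature: the label at u) or an index k of
   the enumeration of regular languages (feature: the miss depth of the k-th
   language, if it is closed). *)
Definition tree_feat (j : nat) (x : tree Sigma) : option (Sigma + option nat) :=
  match (unpickle j : option (node + nat)) with
  | Some (inl u) => Some (inl (x u))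
  | Some (inr k) =>
      Some (inr (if asbool (closed_regular (@regular_enum Sigma k))
                 then miss_depth (@regular_enum Sigma k) x else None))
  | None => None
  end.

Lemma tree_feat_node (u : node) x :
  tree_feat (pickle (inl u : node + nat)) x = Some (inl (x u)).
Proof. by rewrite /tree_feat pickleK. Qed.

Lemma tree_feat_inj x y : (forall j, tree_feat j x = tree_feat j y) -> x = y.
Proof.
move=> eq_xy; apply: functional_extensionality => u.
by move: (eq_xy (pickle (inl u : node + nat))); rewrite !tree_feat_node => -[].
Qed.

Lemma agree_upto_fin_nbhd n x : fin_nbhd closed_regular x (agree_upto n x).
Proof.
have cyl_nbhd u : fin_nbhd closed_regular x (cylinder u (x u)).
  exact: fin_nbhd_basic (cylinder_closed_regular u (x u)) _.
apply: fin_nbhd_impl (fin_nbhd_all_seq (s := nodes_upto n) (fun u _ => cyl_nbhd u)).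
by move=> y y_cyl u /mem_nodes_upto /y_cyl.
Qed.

Lemma tree_feat_fin_nbhd i x : fin_nbhd closed_regular x (fun y => tree_feat i x = tree_feat i y).
Proof.
rewrite /tree_feat; case: unpickle => [[u|k]|]; last by exists nil.
- apply: fin_nbhd_impl (fin_nbhd_basic (cylinder_closed_regular u (x u)) _) => //.
  by move=> y ->.
- case: asboolP => [[L_reg L_closed]|]; last by exists nil.
  set L := @regular_enum Sigma k; have [Lx | nLx] := classic (L x).
  + apply: fin_nbhd_impl (fin_nbhd_basic (conj L_reg L_closed) Lx).
    by move=> y Ly; rewrite !miss_depth_in.
  + case Ex: (miss_depth L x) => [n|]; last by case: nLx; exact: miss_depth_None Ex.
    apply: fin_nbhd_impl (agree_upto_fin_nbhd n x).
    by move=> y /(miss_depth_agree Ex) ->.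
Qed.

Lemma closed_regular_feat_nbhd V x :
  closed_regular V -> V x -> feat_nbhd tree_feat x V.
Proof.
move=> V_basic Vx; case: (regular_enum_surj V_basic.1) => k V_k.
exists (pickle (inr k : node + nat)) => y /(_ _ (leqnn _)).
rewrite /tree_feat pickleK; case: asboolP => [_|]; last by rewrite -V_k.
rewrite -V_k miss_depth_in // => -[] /esym; exact: miss_depth_None V_basic.2.
Qed.

Lemma tree_fdist_complete : complete_metric (fdist tree_feat).
Proof.
move=> s /cauchy_fdist_stable stable.
have [M M_stable] : {M : nat -> nat |
    forall i, eventually (fun m => tree_feat i (s m) = tree_feat i (s (M i)))}.
  exists (fun i => proj1_sig (constructive_indefinite_description _ (stable i))) => i.
  exact: (proj2_sig (constructive_indefinite_description _ (stable i))).
pose t u := s (M (pickle (inl u : node + nat))) u.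
have node_lim u : eventually (fun m => s m u = t u).
  case: (M_stable (pickle (inl u : node + nat))) => N HN.
  by exists N => m /HN; rewrite !tree_feat_node => -[].
have agree_lim n : eventually (fun m => agree_upto n (s m) t).
  case: (eventually_all_seq (s := nodes_upto n) (fun u _ => node_lim u)) => N HN.
  by exists N => m /HN s_t u /mem_nodes_upto /s_t.
exists t; apply: fdist_converges => i; case: (M_stable i) => N HN.
move: HN; rewrite /tree_feat; case: unpickle => [[u|k]|] HN; last by exists 0%N.
- by case: (node_lim u) => N' HN'; exists N' => m /HN' ->.
- case: asboolP HN => [[_ L_closed]|] HN; last by exists 0%N.
  exists N => m le_Nm; rewrite HN //; congr (Some (inr _)); apply/esym.
  by apply: (miss_depth_limit L_closed agree_lim); exists N => m' /HN [].
Qed.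

End TreeFeatures.

Theorem mainTheorem13 (Sigma : finType) (hSigma : (1 < #|Sigma|)%N) :
  polish (@automatic_open Sigma).
Proof.
case/card_gt0P: (ltnW hSigma) => sigma0 _.
exists (fdist (@tree_feat Sigma)); split; first exact/fdist_metric/tree_feat_inj.
split; first exact: generated_open_fdist (@tree_feat_fin_nbhd Sigma)
                                         (@closed_regular_feat_nbhd Sigma).
split; [exact: tree_fdist_complete | exact/fdist_separable/(inhabits (fun _ => sigma0))].
Qed.
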